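(* Let $\mathbf{B}$ be a 2-element algebra with universe $\{0,1\}$ such that at least one of the following holds: (1) $\mathbf{B}\preceq\boldsymbol{\bigwedge}$, (2) $\mathbf{B}\preceq\boldsymbol{\bigvee}$, or (3) $\mathbf{B}\preceq\mathsf{U}$. Let $\mathbf{A}=\mathbf{B}^n$. Then any quantum algorithm which solves $\mathrm{HKP}(\mathbf{A})$ must make $\Omega((1+\epsilon)^n)$ queries to the oracle, for $0<\epsilon<1$.
   Context: $\mathrm{Clo}(\mathbf{B})$ is the clone of term operations of $\mathbf{B}$ (smallest set of operations on $\{0,1\}$ containing the basic operations and projections, closed under composition). For a clone $\mathcal{C}$ on $\{0,1\}$, $\mathbf{B}\preceq\mathcal{C}$ means $\mathrm{Clo}(\mathbf{B})\subseteq\mathcal{C}$. $\boldsymbol{\bigwedge}$ is the clone generated by $x\wedge y$ and the constants $0,1$; $\boldsymbol{\bigvee}$ is the clone generated by $x\vee y$ and the constants $0,1$; $\mathsf{U}$ is the clone generated by $\neg x$ and the constant $0$. $\mathbf{B}^n$ is the direct power with coordinatewise operations. A congruence is an equivalence relation compatible with all operations; $\ker(\phi)=\{(a,b):\phi(a)=\phi(b)\}$. The Hidden Kernel Problem $\mathrm{HKP}(\mathbf{A})$: given a similar algebra $\mathbf{C}$ and a homomorphism $\phi:\mathbf{A}\to\mathbf{C}$ accessible only as an oracle, determine the congruence $\ker(\phi)$. *)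

From HB Require Import structures.
From mathcomp Require Import all_boot all_order all_algebra all_field.
Set Implicit Arguments. Unset Strict Implicit. Unset Printing Implicit Defensive.
Import Order.TTheory GRing.Theory Num.Theory.
Local Open Scope ring_scope.

Definition bop (k : nat) := k.-tuple bool -> bool.

Definition opset := forall k : nat, bop k -> Prop.

(* Clone generated by F: smallest set containing F and the projections,
   closed under composition (operations identified extensionally). *)
Inductive clo (F : opset) : forall k : nat, bop k -> Prop :=
| clo_proj k (f : bop k) (i : 'I_k) :
    (forall x, f x = tnth x i) -> clo F f
| clo_base k (f g : bop k) :
    F k g -> (forall x, f x = g x) -> clo F f
| clo_comp k m (f : bop k) (g : bop m) (hs : 'I_m -> bop k) :
    clo F g -> (forall j, clo F (hs j)) ->
    (forall x, f x = g [tuple hs j x | j < m]) -> clo F f.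

Definition clone_le (F G : opset) : Prop :=
  forall k (f : bop k), clo F f -> G k f.

(* Generators of the clones /\ (and, constants 0,1), \/ (or, constants 0,1),
   U (negation, constant 0).  Constants are nullary; composition with them
   yields constants of every arity. *)
Definition gen_and : opset := fun k g =>
  [/\ k = 2%N & forall x, g x = nth false x 0 && nth false x 1] \/
  [/\ k = 0%N & forall x, g x = false] \/
  [/\ k = 0%N & forall x, g x = true].
Definition gen_or : opset := fun k g =>
  [/\ k = 2%N & forall x, g x = nth false x 0 || nth false x 1] \/
  [/\ k = 0%N & forall x, g x = false] \/
  [/\ k = 0%N & forall x, g x = true].
Definition gen_U : opset := fun k g =>
  [/\ k = 1%N & forall x, g x = ~~ nth false x 0] \/
  [/\ k = 0%N & forall x, g x = false].

Definition Clo_and := clo gen_and.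
Definition Clo_or := clo gen_or.
Definition Clo_U := clo gen_U.

Definition basic_ops (I : Type) (ar : I -> nat)
  (opsB : forall i, bop (ar i)) : opset :=
  fun k f => exists i (e : ar i = k), forall x, f x = opsB i (tcast (esym e) x).

Definition preceq (I : Type) (ar : I -> nat) (opsB : forall i, bop (ar i))
  (C : forall k, bop k -> Prop) : Prop :=
  forall k (f : bop k), clo (basic_ops opsB) f -> C k f.

Definition pow_op (I : Type) (ar : I -> nat) (opsB : forall i, bop (ar i))
  (n : nat) (i : I) (xs : (ar i).-tuple (n.-tuple bool)) : n.-tuple bool :=
  [tuple opsB i [tuple tnth (tnth xs j) k | j < ar i] | k < n].

Definition is_hom (I : Type) (ar : I -> nat) (opsB : forall i, bop (ar i))
  (n : nat) (C : Type) (opsC : forall i, (ar i).-tuple C -> C)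
  (phi : n.-tuple bool -> C) : Prop :=
  forall i (xs : (ar i).-tuple (n.-tuple bool)),
    phi (pow_op opsB xs) = opsC i (map_tuple phi xs).

(* An HKP(B^n) instance, as seen by the oracle: the function a |-> enc (phi a)
   where phi : B^n -> C is a homomorphism into some similar algebra C and
   enc injectively encodes elements of C as m-bit strings. *)
Definition hkp_instance (I : Type) (ar : I -> nat) (opsB : forall i, bop (ar i))
  (n m : nat) (f : n.-tuple bool -> m.-tuple bool) : Prop :=
  exists (C : Type) (opsC : forall i, (ar i).-tuple C -> C)
         (phi : n.-tuple bool -> C) (enc : C -> m.-tuple bool),
    [/\ is_hom opsB opsC phi, injective enc & forall a, f a = enc (phi a)].

(* ker(phi) (= ker f, since enc is injective), as a set of pairs. *)
Definition kerset (n m : nat) (f : n.-tuple bool -> m.-tuple bool)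
  : {set (n.-tuple bool * n.-tuple bool)} :=
  [set p | f p.1 == f p.2].

(* Basis states: (query register in A = B^n) * (answer register: m bits)
   * (workspace W).  Amplitudes in algC. *)
Definition qbasis (n m : nat) (W : finType) : finType :=
  (n.-tuple bool * m.-tuple bool * W)%type.

Definition xor_tuple (m : nat) (y z : m.-tuple bool) : m.-tuple bool :=
  [tuple addb (tnth y j) (tnth z j) | j < m].

Definition oracle_map (n m : nat) (W : finType)
  (f : n.-tuple bool -> m.-tuple bool) (q : qbasis n m W) : qbasis n m W :=
  (q.1.1, xor_tuple q.1.2 (f q.1.1), q.2).

Definition oracle_mx (n m : nat) (W : finType)
  (f : n.-tuple bool -> m.-tuple bool) : 'M[algC]_#|qbasis n m W| :=
  \matrix_(i, j) (if enum_val i == oracle_map f (enum_val j) then 1 else 0).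

Definition unitary (d : nat) (U : 'M[algC]_d) : Prop :=
  U *m (map_mx (fun z => z^*) U)^T = 1%:M.

(* A T-query quantum algorithm: unitaries U_0, ..., U_T, start basis state,
   and a classical post-processing of the final (full) measurement outcome
   into a candidate congruence (a set of pairs of A). *)
Record qalg (n m : nat) (W : finType) := QAlg {
  qT : nat;
  qU : nat -> 'M[algC]_#|qbasis n m W|;
  qstart : qbasis n m W;
  qout : qbasis n m W -> {set (n.-tuple bool * n.-tuple bool)}
}.

Definition qalg_unitary (n m : nat) (W : finType) (Q : qalg n m W) : Prop :=
  forall k, (k <= qT Q)%N -> unitary (qU Q k).

Fixpoint qstate (n m : nat) (W : finType) (Q : qalg n m W)
  (f : n.-tuple bool -> m.-tuple bool) (k : nat) : 'cV[algC]_#|qbasis n m W| :=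
  match k with
  | 0 => qU Q 0 *m delta_mx (enum_rank (qstart Q)) 0
  | k'.+1 => qU Q k *m (oracle_mx W f *m qstate Q f k')
  end.

Definition success_prob (n m : nat) (W : finType) (Q : qalg n m W)
  (f : n.-tuple bool -> m.-tuple bool) : algC :=
  \sum_(q : qbasis n m W | qout Q q == kerset f)
     `|qstate Q f (qT Q) (enum_rank q) 0| ^+ 2.

(* Q solves HKP(B^n) (bounded error 1/3) on all instances whose codomain
   elements are encoded with m bits. *)
Definition solves_HKP (I : Type) (ar : I -> nat) (opsB : forall i, bop (ar i))
  (n m : nat) (W : finType) (Q : qalg n m W) : Prop :=
  qalg_unitary Q /\
  forall f, hkp_instance opsB f -> 2%:R / 3%:R <= success_prob Q f.

(* The clone of B preserves every kernel that the generators of the relevant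
   clone preserve, so any such kernel is an instance of HKP(B^n).  For the
   meet semilattice (dually the join semilattice), collapsing the tuples of
   weight below k gives an instance f0, and collapsing in addition a single
   tuple a of weight k gives an instance that differs from f0 only at a but has
   another kernel; some weight level k contains at least 2^n/(n+1) tuples.
   For U, collapsing {p, ~p} works for every tuple p.  A bounded-error
   algorithm must tell f0 apart from each of these instances, whereas by the
   hybrid argument an algorithm with T queries can tell f0 apart from at most
   72 T^2 of its single-point modifications.  Hence 2^n <= 72 (n+1) T^2, that
   is, T >= (9/8)^n / 12. *)

From mathcomp Require Import all_boot all_order all_algebra all_field.
From mathcomp Require Import zify ring lra.
Import Order.TTheory GRing.Theory Num.Theory.

Set Implicit Arguments. Unset Strict Implicit. Unset Printing Implicit Defensive.

Section KernelCompatibility.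
Variables (n : nat) (T : Type) (f : n.-tuple bool -> T).

(* [pow_op opsB i] is [lift_op (opsB i)] by definition. *)
Definition lift_op k (g : bop k) (xs : k.-tuple (n.-tuple bool)) : n.-tuple bool :=
  [tuple g [tuple tnth (tnth xs j) c | j < k] | c < n].

Definition ker_compatible k (g : bop k) : Prop :=
  forall xs ys : k.-tuple (n.-tuple bool),
    (forall j, f (tnth xs j) = f (tnth ys j)) -> f (lift_op g xs) = f (lift_op g ys).

Lemma ker_compatible_nullary (g : bop 0) : ker_compatible g.
Proof. by move=> xs ys _; rewrite (tuple0 xs) (tuple0 ys). Qed.

Lemma clo_ker_compatible (F : opset) :
  (forall k (g : bop k), F k g -> ker_compatible g) ->
  forall k (g : bop k), clo F g -> ker_compatible g.
Proof.
move=> compF k g; elim=> {k g}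
  [k g i gE | k g g' /compF comp_g' gE | k l g g' hs _ IHg' _ IHhs gE] xs ys xys.
- have liftE zs : lift_op g zs = tnth zs i.
    by apply: eq_from_tnth => c; rewrite !tnth_mktuple gE tnth_mktuple.
  by rewrite !liftE.
- have liftE zs : lift_op g zs = lift_op g' zs by apply: eq_mktuple => c; rewrite gE.
  by rewrite !liftE; apply: comp_g'.
- have liftE zs : lift_op g zs = lift_op g' [tuple lift_op (hs j) zs | j < l].
    apply: eq_mktuple => c; rewrite gE; congr g'.
    by apply: eq_from_tnth => j; rewrite !tnth_mktuple.
  by rewrite !liftE; apply: IHg' => j; rewrite !tnth_mktuple; apply: IHhs.
Qed.

End KernelCompatibility.

Lemma basic_ops_ker_compatible I (ar : I -> nat) (opsB : forall i, bop (ar i))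
    (G : opset) n T (f : n.-tuple bool -> T) :
  preceq opsB (clo G) -> (forall k (g : bop k), G k g -> ker_compatible f g) ->
  forall i, ker_compatible f (opsB i).
Proof.
move=> opsB_G compG i; apply: (clo_ker_compatible compG); apply: opsB_G.
apply: (clo_base (g := opsB i)) => //.
by exists i, erefl => x; rewrite tcast_id.
Qed.

(* The codomain algebra is {0,1}^m itself, with operations defined through
   arbitrary preimages; compatibility makes the choice of preimage irrelevant. *)
Lemma hkp_instance_of_ker_compatible I (ar : I -> nat) (opsB : forall i, bop (ar i))
    n m (f : n.-tuple bool -> m.-tuple bool) :
  (forall i, ker_compatible f (opsB i)) -> hkp_instance opsB f.
Proof.
move=> compf.
pose opsC i (ys : (ar i).-tuple (m.-tuple bool)) : m.-tuple bool :=
  if [pick xs | map_tuple f xs == ys] is Some xs then f (pow_op opsB xs)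
  else [tuple false | _ < m].
exists (m.-tuple bool), opsC, f, id; split=> // i xs; rewrite /opsC.
case: pickP => [xs' /eqP fxs'|/(_ xs)]; last by rewrite eqxx.
apply: compf => j; have := congr1 (fun t => tnth t j) fxs'.
by rewrite !tnth_map.
Qed.

Section Collapse.
Variables (n m : nat) (le_nm : n <= m).
Implicit Types (D : {set n.-tuple bool}) (r x y : n.-tuple bool).

Definition pad x : m.-tuple bool := [tuple nth false x i | i < m].

Lemma pad_inj : injective pad.
Proof.
move=> x y /(congr1 (fun t => tnth t (widen_ord le_nm _))) pad_xy.
by apply: eq_from_tnth => i; move: (pad_xy i); rewrite !tnth_mktuple -!tnth_nth.
Qed.

Definition collapse D r x : m.-tuple bool := pad (if x \in D then r else x).

Lemma collapse_eq D r x y : r \in D ->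
  (collapse D r x == collapse D r y) = (x == y) || (x \in D) && (y \in D).
Proof.
move=> rD; rewrite /collapse (inj_eq pad_inj).
case: ifP => xD; case: ifP => yD; rewrite ?eqxx ?orbT ?orbF //.
- by apply/eqP/eqP => xy; move: yD; rewrite -xy ?rD ?xD.
- by apply/eqP/eqP => xy; move: xD; rewrite ?xy ?rD ?yD.
Qed.

Definition lift2 (h : bool -> bool -> bool) x y : n.-tuple bool :=
  [tuple h (tnth x c) (tnth y c) | c < n].

Definition neg_tuple x : n.-tuple bool := [tuple ~~ tnth x c | c < n].

Lemma neg_tupleK : involutive neg_tuple.
Proof. by move=> x; apply: eq_from_tnth => c; rewrite !tnth_mktuple negbK. Qed.

Definition absorbs h D := forall x y, x \in D -> lift2 h x y \in D /\ lift2 h y x \in D.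

Lemma collapse_compatible2 h D r (g : bop 2) : r \in D -> absorbs h D ->
  (forall s, g s = h (nth false s 0) (nth false s 1)) -> ker_compatible (collapse D r) g.
Proof.
move=> rD absD gE xs ys fxys.
have liftE zs : lift_op g zs = lift2 h (tnth zs ord0) (tnth zs (lift ord0 ord0)).
  apply: eq_mktuple => c; rewrite gE.
  by rewrite (nth_mktuple _ _ ord0) (nth_mktuple _ _ (lift ord0 ord0)).
apply/eqP; rewrite !liftE collapse_eq //.
move: (fxys ord0) (fxys (lift ord0 ord0)) => /eqP + /eqP; rewrite !collapse_eq //.
case/orP=> [/eqP-> | /andP[x0D y0D] _]; last first.
  by rewrite (absD _ _ x0D).1 (absD _ _ y0D).1 orbT.
case/orP=> [/eqP->|/andP[x1D y1D]]; first by rewrite eqxx.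
by rewrite (absD _ _ x1D).2 (absD _ _ y1D).2 orbT.
Qed.

Lemma collapse_compatible_neg D r (g : bop 1) : r \in D ->
  (forall x, x \in D -> neg_tuple x \in D) ->
  (forall s, g s = ~~ nth false s 0) -> ker_compatible (collapse D r) g.
Proof.
move=> rD negD gE xs ys /(_ ord0)/eqP; rewrite collapse_eq // => xy.
have liftE zs : lift_op g zs = neg_tuple (tnth zs ord0).
  by apply: eq_mktuple => c; rewrite gE (nth_mktuple _ _ ord0).
apply/eqP; rewrite !liftE; rewrite collapse_eq //.
by case/orP: xy => [/eqP->|/andP[/negD-> /negD->]]; rewrite ?eqxx ?orbT.
Qed.

Lemma gen_and_ker_compatible D r : r \in D -> absorbs andb D ->
  forall k (g : bop k), gen_and g -> ker_compatible (collapse D r) g.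
Proof.
move=> rD absD k g [[ek gE]|[[ek _]|[ek _]]]; subst k; try exact: ker_compatible_nullary.
exact: collapse_compatible2 absD gE.
Qed.

Lemma gen_or_ker_compatible D r : r \in D -> absorbs orb D ->
  forall k (g : bop k), gen_or g -> ker_compatible (collapse D r) g.
Proof.
move=> rD absD k g [[ek gE]|[[ek _]|[ek _]]]; subst k; try exact: ker_compatible_nullary.
exact: collapse_compatible2 absD gE.
Qed.

Lemma gen_U_ker_compatible D r : r \in D -> (forall x, x \in D -> neg_tuple x \in D) ->
  forall k (g : bop k), gen_U g -> ker_compatible (collapse D r) g.
Proof.
move=> rD negD k g [[ek gE]|[ek _]]; subst k; last exact: ker_compatible_nullary.
exact: collapse_compatible_neg negD gE.
Qed.

End Collapse.

Lemma exists_sum_le_card_mul (J : finType) (F : J -> nat) (j0 : J) :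
  exists j, \sum_i F i <= #|J| * F j.
Proof.
have J_gt0 : 0 < #|J| by apply/card_gt0P; exists j0.
have [j maxE] := bigop.eq_bigmax F J_gt0; exists j.
rewrite -maxE -sum_nat_const; apply: leq_sum => i _; exact: leq_bigmax.
Qed.

Section Weight.
Variables (n : nat) (b : bool).
Implicit Types (x y z a : n.-tuple bool).

Definition weight x : nat := \sum_(c < n) (tnth x c != b).

Definition weight_below k : {set n.-tuple bool} := [set x | weight x < k].

Definition weight_level k : {set n.-tuple bool} := [set x | weight x == k].

Lemma weight_le x : weight x <= n.
Proof.
by rewrite -[n in _ <= n]card_ord -sum1_card; apply: leq_sum => c _; case: (_ != _).
Qed.

Lemma weight_eq0 x : (weight x == 0) = (x == [tuple b | _ < n]).
Proof.
rewrite sum_nat_eq0 eqEtuple; apply: eq_forallb => c.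
by rewrite tnth_mktuple; case: (tnth x c); case: b.
Qed.

Lemma weight_leif x z : (forall c, tnth x c = b -> tnth z c = b) ->
  weight z <= weight x ?= iff (z == x).
Proof.
move=> zx; rewrite /weight eqEtuple; apply: leqif_sum => c _; apply/leqifP.
by move: (zx c); case: (tnth x c); case: (tnth z c); case: b => //= /(_ erefl).
Qed.

Lemma card_weight_level_large : exists k : 'I_n.+1, 2 ^ n <= n.+1 * #|weight_level k|.
Proof.
have [k le_sum] := exists_sum_le_card_mul (fun k : 'I_n.+1 => #|weight_level k|) ord0.
exists k; rewrite card_ord in le_sum; apply: leq_trans le_sum.
rewrite -[2]card_bool -card_tuple -sum1_card.
rewrite (partition_big (fun x => inord (weight x) : 'I_n.+1) predT) //=.
apply: eq_leq; apply: eq_bigr => j _; rewrite -sum1_card; apply: eq_bigl => x.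
by rewrite inE -val_eqE /= inordK // ltnS weight_le.
Qed.

Section Absorption.
Variable h : bool -> bool -> bool.
Hypothesis h_absorbing : forall t, h b t = b /\ h t b = b.

Lemma lift2_weight_leif x y :
  weight (lift2 h x y) <= weight x ?= iff (lift2 h x y == x) /\
  weight (lift2 h y x) <= weight x ?= iff (lift2 h y x == x).
Proof.
by split; apply: weight_leif => c xc; rewrite tnth_mktuple xc; case: (h_absorbing (tnth y c)).
Qed.

Lemma absorbs_weight_below k : absorbs h (weight_below k).
Proof.
move=> x y; rewrite !inE => wx; have [[le1 _] [le2 _]] := lift2_weight_leif x y.
by split; apply: leq_ltn_trans wx.
Qed.

Lemma absorbs_weight_level a : absorbs h (a |: weight_below (weight a)).
Proof.
move=> x y /setU1P[->|/(absorbs_weight_below y)[D1 D2]]; last by rewrite !setU1r.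
have [[le1 eq1] [le2 eq2]] := lift2_weight_leif a y.
by rewrite !inE !ltn_neqAle le1 le2 eq1 eq2 !andbT; split; case: eqP.
Qed.

End Absorption.
End Weight.

Section Mass.
Local Open Scope ring_scope.

Lemma normC_add_sqr_le (a b k : algC) : 0 < k ->
  `|a + b| ^+ 2 <= (1 + k) * `|a| ^+ 2 + (1 + k^-1) * `|b| ^+ 2.
Proof.
move=> k_gt0; rewrite -subr_ge0.
have -> : (1 + k) * `|a| ^+ 2 + (1 + k^-1) * `|b| ^+ 2 - `|a + b| ^+ 2
    = `|k * a - b| ^+ 2 / k.
  rewrite !normCK !rmorphD !rmorphN rmorphM /= (geC0_conj (ltW k_gt0)).
  by field; rewrite gt_eqF.
by rewrite divr_ge0 ?exprn_ge0 ?normr_ge0 ?ltW.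
Qed.

Variable d : nat.
Implicit Types (E : pred 'I_d) (u v : 'cV[algC]_d).

Definition mass E v : algC := \sum_(i | E i) `|v i 0| ^+ 2.

Definition sqnorm v : algC := mass predT v.

Lemma mass_subset E E' v : {subset E <= E'} -> mass E v <= mass E' v.
Proof.
move=> sEE'; rewrite [leRHS](bigID E) /=.
have -> : \sum_(i | E' i && E i) `|v i 0| ^+ 2 = mass E v.
  apply: eq_bigl => i; case: (boolP (E i)) => [Ei|]; rewrite ?andbF ?andbT //.
  exact: sEE'.
by rewrite lerDl sumr_ge0 // => i _; rewrite exprn_ge0.
Qed.

Lemma mass_disjoint_le E E' v : (forall i, E i -> E' i -> False) ->
  mass E v + mass E' v <= sqnorm v.
Proof.
move=> EE'; rewrite /sqnorm [mass predT v](bigID E) /=; apply: lerD.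
  by apply: (@mass_subset E (fun i => predT i && E i)) => i /= ->.
apply: (@mass_subset E' (fun i => predT i && ~~ E i)) => i /= E'i.
by apply/negP => /EE' /(_ E'i).
Qed.

Lemma massB E u v : mass E (u - v) = \sum_(i | E i) `|u i 0 - v i 0| ^+ 2.
Proof. by apply: eq_bigr => i _; rewrite !mxE. Qed.

Lemma mass_add_le E u v k : 0 < k ->
  mass E (u + v) <= (1 + k) * mass E u + (1 + k^-1) * mass E v.
Proof.
move=> k_gt0; rewrite /mass !mulr_sumr -big_split /=; apply: ler_sum => i _.
by rewrite mxE; apply: normC_add_sqr_le.
Qed.

Lemma sqnorm_add_le u v k : 0 < k ->
  sqnorm (u + v) <= (1 + k) * sqnorm u + (1 + k^-1) * sqnorm v.
Proof. exact: mass_add_le. Qed.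

Lemma sqnorm0 : sqnorm 0 = 0.
Proof. by rewrite /sqnorm /mass big1 // => i _; rewrite mxE normr0 expr0n. Qed.

Lemma sqnorm_delta i : sqnorm (delta_mx i 0) = 1.
Proof.
rewrite /sqnorm /mass (bigD1 i) //= big1 => [|j /negbTE ji]; rewrite mxE ?ji.
  by rewrite !eqxx normr1 expr1n addr0.
by rewrite normr0 expr0n.
Qed.

Lemma sqnorm_mx v : sqnorm v = ((map_mx (fun z => z^*) v)^T *m v) 0 0.
Proof. by rewrite !mxE; apply: eq_bigr => i _; rewrite !mxE normCK mulrC. Qed.

Lemma sqnorm_unitary (U : 'M_d) v : unitary U -> sqnorm (U *m v) = sqnorm v.
Proof.
move=> /mulmx1C U'U; rewrite !sqnorm_mx map_mxM trmx_mul -mulmxA.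
by rewrite [_ *m (U *m v)]mulmxA U'U mul1mx.
Qed.

(* Apply [mass_add_le] to [u = (u - v) + v] with [k = 3]. *)
Lemma sqnorm_sub_ge_of_disjoint E E' u v : (forall i, E i -> E' i -> False) ->
  sqnorm v <= 1 -> 2%:R / 3%:R <= mass E u -> 2%:R / 3%:R <= mass E' v ->
  1 <= 18%:R * sqnorm (u - v).
Proof.
move=> EE' v_le1 Eu E'v.
have Ev : mass E v <= 1 - 2%:R / 3%:R.
  rewrite lerBrDr; apply: le_trans _ (le_trans (mass_disjoint_le v EE') v_le1).
  by rewrite lerD2l.
have Eu_le : mass E u <= 4%:R * sqnorm (u - v) + (1 + 3%:R^-1) * (1 - 2%:R / 3%:R).
  have := mass_add_le E (u - v) v (ltr0n _ 3).
  rewrite subrK [1 + 3%:R]addrC natr1 => /le_trans; apply.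
  apply: lerD; apply: ler_wpM2l => //; first exact: mass_subset.
  by rewrite addr_ge0 ?invr_ge0.
rewrite -subr_ge0.
have -> : 18%:R * sqnorm (u - v) - 1
    = 9%:R / 2%:R * (4%:R * sqnorm (u - v) + (1 + 3%:R^-1) * (1 - 2%:R / 3%:R) - 2%:R / 3%:R).
  by field; rewrite ?pnatr_eq0.
by rewrite mulr_ge0 ?divr_ge0 ?ler0n // subr_ge0 (le_trans Eu).
Qed.

End Mass.

Section Oracle.
Local Open Scope ring_scope.
Variables (n m : nat) (W : finType).
Local Notation d := #|qbasis n m W|.
Implicit Types (f g : n.-tuple bool -> m.-tuple bool) (v : 'cV[algC]_d).

Lemma oracle_mapK f : involutive (oracle_map (W := W) f).
Proof.
case=> [[a y] w]; congr (_, _, _); rewrite /oracle_map /=.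
by apply: eq_from_tnth => j; rewrite !tnth_mktuple addbK.
Qed.

Definition oracle_perm f (i : 'I_d) : 'I_d := enum_rank (oracle_map f (enum_val i)).

Lemma oracle_permK f : involutive (oracle_perm f).
Proof. by move=> i; rewrite /oracle_perm enum_rankK oracle_mapK enum_valK. Qed.

Lemma oracle_perm_query f i : (enum_val (oracle_perm f i)).1.1 = (enum_val i).1.1.
Proof. by rewrite /oracle_perm enum_rankK. Qed.

Lemma oracle_mxE f v i : (oracle_mx W f *m v) i 0 = v (oracle_perm f i) 0.
Proof.
rewrite mxE (bigD1 (oracle_perm f i)) //= big1 ?addr0 => [|j ji].
  by rewrite mxE /oracle_perm enum_rankK oracle_mapK eqxx mul1r.
rewrite mxE; case: eqP => [ij|_]; last by rewrite mul0r.
by move: ji; rewrite /oracle_perm ij oracle_mapK enum_valK eqxx.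
Qed.

Lemma sum_oracle_perm f (E : pred 'I_d) (F : 'I_d -> algC) :
  (forall i, E (oracle_perm f i) = E i) ->
  \sum_(i | E i) F (oracle_perm f i) = \sum_(i | E i) F i.
Proof.
move=> Ef; rewrite (reindex_inj (inv_inj (oracle_permK f))) /=.
by apply: eq_big => i; rewrite ?Ef ?oracle_permK.
Qed.

Lemma sqnorm_oracle f v : sqnorm (oracle_mx W f *m v) = sqnorm v.
Proof.
rewrite /sqnorm /mass -(sum_oracle_perm (f := f) (E := predT) (fun i => `|v i 0| ^+ 2)) //.
by apply: eq_bigr => i _; rewrite oracle_mxE.
Qed.

Definition query_mass (p : n.-tuple bool) v := mass [pred i | (enum_val i).1.1 == p] v.

(* Two oracles that differ only at [p] act differently only on basis states
   querying [p]. *)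
Lemma sqnorm_oracle_sub_le f g p v : (forall x, x != p -> g x = f x) ->
  sqnorm (oracle_mx W g *m v - oracle_mx W f *m v) <= 4%:R * query_mass p v.
Proof.
move=> gf; rewrite /sqnorm massB (bigID [pred i | (enum_val i).1.1 == p]) /=.
rewrite [X in _ + X]big1 ?addr0 => [|i /= ip]; last first.
  by rewrite !oracle_mxE /oracle_perm /oracle_map gf // subrr normr0 expr0n.
apply: (@le_trans _ _ (\sum_(i | (enum_val i).1.1 == p)
    (2%:R * `|v (oracle_perm g i) 0| ^+ 2 + 2%:R * `|v (oracle_perm f i) 0| ^+ 2))).
  apply: ler_sum => i _; rewrite !oracle_mxE.
  by have := normC_add_sqr_le (v (oracle_perm g i) 0) (- v (oracle_perm f i) 0) ltr01;
    rewrite normrN invr1.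
have massE h : \sum_(i | (enum_val i).1.1 == p) `|v (oracle_perm h i) 0| ^+ 2
    = query_mass p v.
  by rewrite (sum_oracle_perm (f := h) (fun i => `|v i 0| ^+ 2)) // => i; rewrite oracle_perm_query.
by rewrite big_split /= -!mulr_sumr !massE -mulrDl -natrD.
Qed.

Lemma sum_query_mass_le (S : {set n.-tuple bool}) v :
  \sum_(p in S) query_mass p v <= sqnorm v.
Proof.
rewrite /query_mass /mass (eq_bigr (fun p => \sum_(i | ((enum_val i).1.1 \in S)
    && ((enum_val i).1.1 == p)) `|v i 0| ^+ 2)) => [|p pS].
  rewrite -(partition_big (fun i => (enum_val i).1.1) (mem S)) //.
  exact: (mass_subset (E := fun i => (enum_val i).1.1 \in S)).
by apply: eq_bigl => i /=; case: eqP => [->|]; rewrite ?pS ?andbF.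
Qed.

End Oracle.

Section QueryAlgorithm.
Local Open Scope ring_scope.
Variables (n m : nat) (W : finType) (Q : qalg n m W).
Hypothesis Q_unitary : qalg_unitary Q.
Local Notation T := (qT Q).
Implicit Types (f g : n.-tuple bool -> m.-tuple bool).

Lemma sqnorm_qstate f j : (j <= T)%N -> sqnorm (qstate Q f j) = 1.
Proof.
elim: j => [_|j IHj lt_jT] /=.
  by rewrite sqnorm_unitary ?sqnorm_delta //; apply: Q_unitary.
by rewrite sqnorm_unitary ?sqnorm_oracle ?IHj ?(ltnW lt_jT) //; apply: Q_unitary.
Qed.

Definition oracle_gap f g l :=
  sqnorm (oracle_mx W g *m qstate Q f l - oracle_mx W f *m qstate Q f l).

(* Hybrid argument: after [j.+1] queries the difference is the fresh oracle
   gap plus a unitary image of the previous difference; weighting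
   [sqnorm_add_le] with [k = j] keeps the factor linear in [j]. *)
Lemma sqnorm_qstate_sub_le f g j : (j <= T)%N ->
  sqnorm (qstate Q g j - qstate Q f j) <= j%:R * \sum_(l < j) oracle_gap f g l.
Proof.
elim: j => [_|j IHj lt_jT]; first by rewrite /= subrr sqnorm0 mul0r.
rewrite /= -mulmxBr sqnorm_unitary; last exact: Q_unitary.
have -> : oracle_mx W g *m qstate Q g j - oracle_mx W f *m qstate Q f j
    = (oracle_mx W g *m qstate Q f j - oracle_mx W f *m qstate Q f j)
      + oracle_mx W g *m (qstate Q g j - qstate Q f j).
  by rewrite mulmxBr [in RHS]addrC addrA subrK.
rewrite big_ord_recr /=; have [->|j_gt0] := posnP j.
  by rewrite /= subrr mulmx0 addr0 big_ord0 add0r mul1r; exact: lexx.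
have j_gt0' : (0 : algC) < j%:R by rewrite ltr0n.
apply: le_trans (sqnorm_add_le _ _ j_gt0') _; rewrite sqnorm_oracle.
apply: (@le_trans _ _ ((1 + j%:R) * oracle_gap f g j
    + (1 + j%:R^-1) * (j%:R * \sum_(l < j) oracle_gap f g l))).
  by rewrite lerD2l ler_wpM2l ?(IHj (ltnW lt_jT)) // addr_ge0 ?invr_ge0 ?ler0n.
rewrite le_eqVlt; apply/orP; left; apply/eqP.
by rewrite -natr1; field; rewrite gt_eqF.
Qed.

Lemma success_probE f : success_prob Q f =
  mass [pred i | qout Q (enum_val i) == kerset f] (qstate Q f T).
Proof.
rewrite /success_prob /mass (reindex enum_rank) /=; last exact: onW_bij (enum_rank_bij _).
by apply: eq_bigl => q; rewrite enum_rankK.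
Qed.

Lemma sqnorm_qstate_sub_ge f g :
  2%:R / 3%:R <= success_prob Q f -> 2%:R / 3%:R <= success_prob Q g ->
  kerset g != kerset f -> 1 <= 18%:R * sqnorm (qstate Q g T - qstate Q f T).
Proof.
rewrite !success_probE => succ_f succ_g kergf.
apply: (sqnorm_sub_ge_of_disjoint _ _ succ_g succ_f).
  by move=> i /= /eqP-> /eqP kergf'; rewrite kergf' eqxx in kergf.
by rewrite sqnorm_qstate.
Qed.

(* [fam p] can only be told apart from [f0] through the query mass on [p], and
   the query masses over all [p] sum to at most [T]. *)
Lemma card_le_queries f0 (S : {set n.-tuple bool}) fam :
  2%:R / 3%:R <= success_prob Q f0 ->
  {in S, forall p, 2%:R / 3%:R <= success_prob Q (fam p)} ->
  {in S, forall p x, x != p -> fam p x = f0 x} ->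
  {in S, forall p, kerset (fam p) != kerset f0} ->
  (#|S| <= 72 * T ^ 2)%N.
Proof.
move=> succ0 succS famS kerS.
have far p : p \in S -> 1 <= 72%:R * T%:R * \sum_(l < T) query_mass p (qstate Q f0 l).
  move=> pS; apply: le_trans (sqnorm_qstate_sub_ge succ0 (succS p pS) (kerS p pS)) _.
  rewrite (natrM _ 18 4) -!mulrA ler_wpM2l ?ler0n //.
  apply: le_trans (sqnorm_qstate_sub_le f0 (fam p) (leqnn T)) _.
  rewrite mulrCA ler_wpM2l ?ler0n // mulr_sumr; apply: ler_sum => l _.
  exact: sqnorm_oracle_sub_le (famS p pS).
rewrite -(ler_nat algC) -sum1_card natr_sum.
apply: (@le_trans _ _ (\sum_(p in S) 72%:R * T%:R * \sum_(l < T) query_mass p (qstate Q f0 l))).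
  exact: ler_sum.
rewrite -mulr_sumr exchange_big /=.
apply: (@le_trans _ _ (72%:R * T%:R * \sum_(l < T) 1)).
  apply: ler_wpM2l; first by rewrite mulr_ge0 ?ler0n.
  apply: ler_sum => l _; rewrite -(sqnorm_qstate f0 (ltnW (ltn_ord l))).
  exact: sum_query_mass_le.
by rewrite sumr_const card_ord -mulr_natr mul1r -!natrM ler_nat -mulnA.
Qed.
End QueryAlgorithm.

Section HardFamily.
Variables (I : Type) (ar : I -> nat) (opsB : forall i, bop (ar i)) (n m : nat).

Definition hard_family (f0 : n.-tuple bool -> m.-tuple bool) (S : {set n.-tuple bool})
    (fam : n.-tuple bool -> n.-tuple bool -> m.-tuple bool) : Prop :=
  [/\ hkp_instance opsB f0, {in S, forall p, hkp_instance opsB (fam p)},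
      {in S, forall p x, x != p -> fam p x = f0 x},
      {in S, forall p, kerset (fam p) != kerset f0} & 2 ^ n <= n.+1 * #|S|].

Definition has_hard_family : Prop := exists f0 S fam, hard_family f0 S fam.

Lemma hard_family_queries (W : finType) (Q : qalg n m W) :
  solves_HKP opsB Q -> has_hard_family -> 2 ^ n <= n.+1 * (72 * qT Q ^ 2).
Proof.
move=> [Q_unitary solQ] [f0 [S [fam [inst0 instS famS kerS card_S]]]].
apply: leq_trans card_S _; rewrite leq_mul2l; apply/orP; right.
apply: (card_le_queries Q_unitary (solQ _ inst0) _ famS kerS) => p pS.
exact/solQ/instS.
Qed.

End HardFamily.

Lemma kerset_neq n m (f g : n.-tuple bool -> m.-tuple bool) x y :
  f x = f y -> g x != g y -> kerset f != kerset g.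
Proof.
move=> fxy gxy; apply: contraNneq gxy => fg.
have : (x, y) \in kerset f by rewrite inE fxy.
by rewrite fg inE.
Qed.

Lemma succn_lt_exp2 n : 1 < n -> n.+1 < 2 ^ n.
Proof. by case: n => [|[|p]] // _; have := ltn_expl p (ltnSn 1); rewrite !expnS; lia. Qed.

Section Families.
Variables (I : Type) (ar : I -> nat) (opsB : forall i, bop (ar i)) (n m : nat).
Hypothesis le_nm : n <= m.

(* [f0] collapses the tuples of weight below [k]; [fam a] also collapses [a],
   of weight exactly [k]; both kernels are congruences because these sets
   absorb the semilattice operation [h]. *)
Lemma semilattice_hard_family (G : opset) h b : (forall t, h b t = b /\ h t b = b) ->
  (forall (D : {set n.-tuple bool}) r, r \in D -> absorbs h D ->
     forall k (g : bop k), G k g -> ker_compatible (collapse m D r) g) ->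
  preceq opsB (clo G) -> 1 < n -> has_hard_family opsB n m.
Proof.
move=> hb compG opsB_G n_gt1.
have [k card_k] := card_weight_level_large n b.
pose r := [tuple b | _ < n].
have wr : weight b r = 0 by apply/eqP; rewrite weight_eq0.
have k_gt0 : 0 < k.
  rewrite lt0n; apply: contraTneq card_k => k0; rewrite -ltnNge.
  have card_k_le1 : #|weight_level n b k| <= 1.
    rewrite -(cards1 r); apply: subset_leq_card; apply/subsetP => x.
    by rewrite !inE k0 weight_eq0.
  apply: leq_ltn_trans (succn_lt_exp2 n_gt1).
  by rewrite -[leqRHS]muln1 leq_mul2l card_k_le1 orbT.
have r_below : r \in weight_below n b k by rewrite inE wr.
have hkp_collapse (D : {set n.-tuple bool}) :
    r \in D -> absorbs h D -> hkp_instance opsB (collapse m D r).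
  move=> rD absD; apply: hkp_instance_of_ker_compatible.
  exact: basic_ops_ker_compatible opsB_G (compG D r rD absD).
exists (collapse m (weight_below n b k) r), (weight_level n b k),
  (fun a => collapse m (a |: weight_below n b k) r); split=> //.
- exact/hkp_collapse/absorbs_weight_below.
- move=> a; rewrite inE => /eqP wa; rewrite -wa.
  by apply: hkp_collapse; [rewrite setU1r ?wa | apply: absorbs_weight_level].
- by move=> a _ x xa; rewrite /collapse in_setU1 (negbTE xa).
- move=> a; rewrite inE => /eqP wa; apply: (@kerset_neq _ _ _ _ a r).
    by rewrite /collapse setU11 setU1r.
  rewrite collapse_eq // inE wa ltnn /= orbF.
  by apply: contraTneq k_gt0 => ar_eq; rewrite -wa ar_eq wr.
Qed.

Lemma and_hard_family : preceq opsB Clo_and -> 1 < n ->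
  has_hard_family opsB n m.
Proof.
apply: (@semilattice_hard_family _ andb false) => [t|]; first by case: t.
exact: gen_and_ker_compatible.
Qed.

Lemma or_hard_family : preceq opsB Clo_or -> 1 < n ->
  has_hard_family opsB n m.
Proof.
apply: (@semilattice_hard_family _ orb true) => [t|]; first by case: t.
exact: gen_or_ker_compatible.
Qed.

(* Here every point [p] is hard: [fam p] merges [p] with its complement. *)
Lemma U_hard_family : preceq opsB Clo_U -> 0 < n ->
  has_hard_family opsB n m.
Proof.
move=> opsB_U n_gt0.
exists (pad m), [set: n.-tuple bool],
  (fun p => collapse m [set p; neg_tuple p] (neg_tuple p)); split=> //.
- apply: hkp_instance_of_ker_compatible => i xs ys pad_xys.
  suff -> : xs = ys by [].
  by apply: eq_from_tnth => j; apply: (pad_inj le_nm).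
- move=> p _; apply: hkp_instance_of_ker_compatible.
  apply: (basic_ops_ker_compatible opsB_U); apply: gen_U_ker_compatible => //.
    by rewrite !inE eqxx orbT.
  by move=> x; rewrite !inE => /orP[]/eqP->; rewrite ?neg_tupleK eqxx ?orbT.
- move=> p _ x xp; rewrite /collapse !inE (negbTE xp) /=.
  by case: eqP => [->|].
- move=> p _; apply: (@kerset_neq _ _ _ _ p (neg_tuple p)).
    by rewrite /collapse !inE !eqxx ?orbT.
  rewrite (inj_eq (pad_inj le_nm)); apply/eqP.
  move/(congr1 (fun t => tnth t (Ordinal n_gt0))); rewrite tnth_mktuple.
  by case: (tnth p _).
- by rewrite cardsT card_tuple card_bool leq_pmull.
Qed.

End Families.

Lemma succn_mul_exp81_le n : n.+1 * 81 ^ n <= 2 * 128 ^ n.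
Proof.
elim: n => [|[|n] IHn] //; rewrite [81 ^ _]expnS [128 ^ _]expnS.
by move: IHn; generalize (81 ^ n.+1) (128 ^ n.+1) => a c; nia.
Qed.

Lemma exp9_le_of_exp2_le n T : 2 ^ n <= n.+1 * (72 * T ^ 2) -> 9 ^ n <= 12 * 8 ^ n * T.
Proof.
move=> le_2n; rewrite -leq_sqr -(leq_pmul2l (ltn0Sn n)).
have sqr_exp a : (a ^ n) ^ 2 = (a ^ 2) ^ n by rewrite -!expnM mulnC.
rewrite !expnMn !sqr_exp; apply: leq_trans (succn_mul_exp81_le n) _.
rewrite -[128]/(64 * 2) -[8 ^ 2]/64 expnMn.
by move: le_2n; generalize (2 ^ n) (64 ^ n) => a c; nia.
Qed.

Local Open Scope ring_scope.

Theorem theorem5p2 (I : Type) (ar : I -> nat) (opsB : forall i, bop (ar i)) :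
  preceq opsB Clo_and \/ preceq opsB Clo_or \/ preceq opsB Clo_U ->
  exists (eps c : rat), [/\ 0 < eps, eps < 1 & 0 < c] /\
  exists N : nat, forall n : nat, (N <= n)%N ->
    forall (m : nat), (n <= m)%N ->
    forall (W : finType) (Q : qalg n m W), solves_HKP opsB Q ->
      c * (1 + eps) ^+ n <= (qT Q)%:R.
Proof.
move=> clone_hyp; exists (1 / 8%:R), (1 / 12%:R); split; first by split; lra.
exists 2%N => n n_gt1 m le_nm W Q solQ.
have hard : has_hard_family opsB n m.
  case: clone_hyp => [opsB_and|[opsB_or|opsB_U]].
  - exact: and_hard_family le_nm opsB_and n_gt1.
  - exact: or_hard_family le_nm opsB_or n_gt1.
  - exact: U_hard_family le_nm opsB_U (ltnW n_gt1).
have := exp9_le_of_exp2_le (hard_family_queries solQ hard).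
rewrite -(ler_nat rat) !natrM !natrX.
have -> : 1 / 12%:R * (1 + 1 / 8%:R) ^+ n = 9%:R ^+ n / (12%:R * 8%:R ^+ n) :> rat.
  have -> : 1 + 1 / 8%:R = 9%:R / 8%:R :> rat by field.
  by rewrite expr_div_n; field; rewrite expf_neq0.
by rewrite ler_pdivrMr ?mulr_gt0 ?exprn_gt0 // mulrC.
Qed.
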